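(* Let $\Delta \geq 3$ and let $\Pi^{\Delta}$ be the node-edge-checkable problem defined in the context. Then there exists a node-edge-checkable problem $\mathcal{G}$ such that $\Pi^{\Delta} \xrightarrow{0} \mathcal{G}$, $\mathcal{Q}(\mathcal{G}) \xrightarrow{0} \mathcal{G}$, and $\mathcal{G}$ is not $0$-round solvable. That is, $\Pi^{\Delta}$ has a nontrivial fixed point relaxation.
   Context: Fix an integer $\Delta$. A node-edge-checkable problem $\Pi=(\Sigma_\Pi,\mathcal{N}_\Pi,\mathcal{E}_\Pi)$ consists of: - a finite label set $\Sigma_\Pi$; - a set $\mathcal{N}_\Pi$ of cardinality-$\Delta$ multisets over $\Sigma_\Pi$, the node constraint; - a set $\mathcal{E}_\Pi$ of cardinality-$2$ multisets over $\Sigma_\Pi$, the edge constraint. Multisets are called configurations. A solution on a $\Delta$-regular graph assigns a label to each half-edge $(v,e)$ such that the multiset of labels around every node lies in $\mathcal{N}_\Pi$ and the two labels on every edge form a configuration in $\mathcal{E}_\Pi$. $\Pi'$ is a relaxation of $\Pi$, written $\Pi \xrightarrow{0} \Pi'$, if there is a map $f$ with the following properties. For every configuration $C=L_1\dots L_\Delta\in\mathcal{N}_\Pi$ (with a fixed listing) and every $1\le j\le\Delta$, $f$ assigns a label $f(C,j)\in\Sigma_{\Pi'}$. The map must satisfy: - (i) $f(C,1)\dots f(C,\Delta)\in\mathcal{N}_{\Pi'}$ for every $C\in\mathcal{N}_\Pi$; - (ii) whenever $C,C'\in\mathcal{N}_\Pi$ and the $j$-th entry of $C$ together with the $j'$-th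 entry of $C'$ form a configuration in $\mathcal{E}_\Pi$, we have $f(C,j)\,f(C',j')\in\mathcal{E}_{\Pi'}$. Problems differing only by a renaming of labels are identified. Let $\mathcal{T}$ be the trivial problem with $\Sigma=\{x\}$, $\mathcal{N}=\{x\cdots x\}$ and $\mathcal{E}=\{x\,x\}$. A problem $\Pi$ is $0$-round solvable if $\mathcal{T}\xrightarrow{0}\Pi$. Round elimination. Given $\Pi$, the problem $\mathrm{R}(\Pi)$ is defined as follows. - $\mathcal{E}_{\mathrm{R}(\Pi)}$ is the set of configurations $S_1S_2$ of nonempty subsets of $\Sigma_\Pi$ that (a) satisfy $L_1L_2\in\mathcal{E}_\Pi$ for all $L_1\in S_1,L_2\in S_2$, and (b) are maximal among such configurations. Maximal means there is no other such configuration $S_1'S_2'$ and permutation $\rho$ with $S_i\subseteq S'_{\rho(i)}$ for all $i$ and strict inclusion for some $i$. - $\Sigma_{\mathrm{R}(\Pi)}$ is the set of sets occurring in $\mathcal{E}_{\mathrm{R}(\Pi)}$. - $\mathcal{N}_{\mathrm{R}(\Pi)}$ is the set of configurations $S_1\dots S_\Delta$ over $\Sigma_{\mathrm{R}(\Pi)}$ for which some choice $L_i\in S_i$ gives $L_1\dots L_\Delta\in\mathcal{N}_\Pi$. The problem $\bar{\mathrm{R}}(\Pi)$ is defined dually, with the roles of node and edge constraints swapped. - $\mathcal{N}_{\bar{\mathrm{R}}(\Pi)}$ consists of the maximal configurations $S_1\dots S_\Delta$ of nonempty subsets such that every choice $L_i\in S_i$ lies in $\mathcal{N}_\Pi$.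 - $\Sigma_{\bar{\mathrm{R}}(\Pi)}$ is the set of sets occurring in $\mathcal{N}_{\bar{\mathrm{R}}(\Pi)}$. - $\mathcal{E}_{\bar{\mathrm{R}}(\Pi)}$ consists of the configurations $S_1S_2$ over $\Sigma_{\bar{\mathrm{R}}(\Pi)}$ for which some $L_1\in S_1,L_2\in S_2$ satisfy $L_1L_2\in\mathcal{E}_\Pi$. Set $\mathcal{Q}(\Pi)=\bar{\mathrm{R}}(\mathrm{R}(\Pi))$. The problem $\Pi^{\Delta}$ (a homomorphism problem to a fixed graph $H_\Delta$) is defined as follows. Its label set is $\Sigma=\{1,\dots,\Delta\}\times\{1,\dots,\Delta\}$. Its node constraint consists of the configurations $c\,c\cdots c$ for every $c\in\Sigma$. Its edge constraint consists of all configurations $(y,z)\,(y',z')$ satisfying at least one of the following: - (1) $y\ne1\ne z$, $y\ne y'$ and $z\ne z'$ (or symmetrically $y'\ne1\ne z'$, $y\ne y'$ and $z\ne z'$); - (2) $y=y'=1$, $z\ne1\ne z'$ and $z\ne z'$; - (3) $z=z'=1$, $y\ne1\ne y'$ and $y\ne y'$. *)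

From mathcomp Require Import all_boot all_fingroup.
Set Implicit Arguments. Unset Strict Implicit. Unset Printing Implicit Defensive.

Definition mset (T : finType) := {ffun T -> nat}.
Definition msize (T : finType) (m : mset T) : nat := \sum_(x : T) m x.
Definition mset_of (T : finType) (s : seq T) : mset T := [ffun x => count_mem x s].
Definition mlist (T : finType) (m : mset T) : seq T :=
  flatten [seq nseq (m x) x | x <- enum T].

Record problem := Problem {
  lab : finType;
  nodeC : pred (mset lab);
  edgeC : pred (mset lab) }.
Arguments nodeC : clear implicits.
Arguments edgeC : clear implicits.
Arguments lab : clear implicits.

Definition wf_problem (D : nat) (P : problem) : Prop :=
  (forall m, nodeC P m -> msize m = D) /\ (forall m, edgeC P m -> msize m = 2).

Definition relax (D : nat) (P P' : problem) : Prop :=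
  exists f : mset (lab P) -> 'I_D -> lab P',
    (forall C, nodeC P C -> nodeC P' (mset_of [seq f C j | j <- enum 'I_D])) /\
    (forall C C' (j j' : 'I_D) (L1 L2 : lab P),
        nodeC P C -> nodeC P C' ->
        onth (mlist C) j = Some L1 -> onth (mlist C') j' = Some L2 ->
        edgeC P (mset_of [:: L1; L2]) ->
        edgeC P' (mset_of [:: f C j; f C' j'])).

Definition trivial_problem (D : nat) : problem :=
  @Problem unit (fun m => m == mset_of (nseq D tt))
                        (fun m => m == mset_of [:: tt; tt]).

Definition zero_round_solvable (D : nat) (P : problem) : Prop :=
  relax D (trivial_problem D) P.

Section RE.
Variable P : problem.
Local Notation T := (lab P).

Definition goodE (S1 S2 : {set T}) : bool :=
  [&& S1 != set0, S2 != set0 &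
      [forall L1 in S1, forall L2 in S2, edgeC P (mset_of [:: L1; L2])]].

Definition maximalE (S1 S2 : {set T}) : bool :=
  goodE S1 S2 &&
  ~~ [exists S1' : {set T}, exists S2' : {set T},
        goodE S1' S2' &&
        (((S1 \subset S1') && (S2 \subset S2') &&
            ((S1 \proper S1') || (S2 \proper S2'))) ||
         ((S1 \subset S2') && (S2 \subset S1') &&
            ((S1 \proper S2') || (S2 \proper S1'))))].

Definition labR_pred (S : {set T}) : bool :=
  [exists S' : {set T}, maximalE S S' || maximalE S' S].

Definition labR : finType := {S : {set T} | labR_pred S}.

Definition R_problem (D : nat) : problem :=
  @Problem labR
    (fun m => [exists t : {ffun 'I_D -> labR},
                (m == mset_of (codom t)) &&
                [exists c : {ffun 'I_D -> T},
                   [forall i, c i \in val (t i)] && nodeC P (mset_of (codom c))]])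
    (fun m => [exists S1 : labR, exists S2 : labR,
                (m == mset_of [:: S1; S2]) && maximalE (val S1) (val S2)]).
End RE.

Section REbar.
Variable D : nat.
Variable P : problem.
Local Notation T := (lab P).

Definition goodN (t : {ffun 'I_D -> {set T}}) : bool :=
  [forall i, t i != set0] &&
  [forall c : {ffun 'I_D -> T},
     [forall i, c i \in t i] ==> nodeC P (mset_of (codom c))].

Definition maximalN (t : {ffun 'I_D -> {set T}}) : bool :=
  goodN t &&
  ~~ [exists t' : {ffun 'I_D -> {set T}}, exists rho : 'S_D,
        [&& goodN t', [forall i, t i \subset t' (rho i)] &
            [exists i, t i \proper t' (rho i)]]].

Definition labRbar_pred (S : {set T}) : bool :=
  [exists t : {ffun 'I_D -> {set T}}, maximalN t && [exists i, t i == S]].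

Definition labRbar : finType := {S : {set T} | labRbar_pred S}.

Definition Rbar_problem : problem :=
  @Problem labRbar
    (fun m => [exists t : {ffun 'I_D -> labRbar},
                (m == mset_of (codom t)) && maximalN [ffun i => val (t i)]])
    (fun m => [exists S1 : labRbar, exists S2 : labRbar,
                (m == mset_of [:: S1; S2]) &&
                [exists L1 in val S1, exists L2 in val S2,
                   edgeC P (mset_of [:: L1; L2])]]).
End REbar.

Definition Q_problem (D : nat) (P : problem) : problem :=
  Rbar_problem D (R_problem P D).

(** Labels (y,z) in {1..D}x{1..D} are encoded by 'I_D x 'I_D, value k <-> k+1;
    so "y = 1" is "val y == 0". *)
Definition isone (D : nat) (y : 'I_D) : bool := val y == 0.

Definition PiE (D : nat) (a b : 'I_D * 'I_D) : bool :=
  let: (y, z) := a in let: (y', z') := b in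
  [|| [&& ~~ isone y, ~~ isone z, y != y' & z != z'],
      [&& ~~ isone y', ~~ isone z', y != y' & z != z'],
      [&& isone y, isone y', ~~ isone z, ~~ isone z' & z != z'] |
      [&& isone z, isone z', ~~ isone y, ~~ isone y' & y != y']].

Definition PiDelta (D : nat) : problem :=
  @Problem (('I_D * 'I_D)%type : finType)
    (fun m => [exists c : 'I_D * 'I_D, m == mset_of (nseq D c)])
    (fun m => [exists a : 'I_D * 'I_D, exists b : 'I_D * 'I_D,
                (m == mset_of [:: a; b]) && PiE a b]).

(** Identify a label (y, z) of Pi^Delta with the set {(y-side, y), (z-side, z)} of its
    tagged coordinates.  The fixed point G has all sets of tagged coordinates as labels.
    Two sets form an edge iff every element of one is adjacent to every element of the
    other in a fixed graph K on tagged coordinates; D sets form a node iff, for each side b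
    and each bijection q from positions to values, some position i holds (b, q i).

    Any label map sending nodes to nodes and edges to edges is a relaxation; for Pi^Delta
    this is the identification above.  For Q(G), map a label (a set of R(G)-labels) to the
    intersection of the unions of its members.  Edge constraints of G are universal over
    elements, so they pass to unions and then to subsets.  If the images of a Q(G)-node
    missed (b, q i) at every position i, one could pick at each position an R(G)-label whose
    union misses (b, q i); that choice is an R(G)-node, so it contains a G-node, which then
    misses the same values: contradiction.

    A 0-round solution would use sets whose union U is completely joined to itself in K.
    Loops of K sit only at the two coordinates equal to 1, which are not adjacent to each
    other, so U lies within one of them and misses one side entirely; the identity
    bijection on that side violates the node constraint. *)

From mathcomp Require Import all_boot all_fingroup.
Set Implicit Arguments. Unset Strict Implicit. Unset Printing Implicit Defensive.

Lemma count_mlist (T : finType) (m : mset T) (x : T) : count_mem x (mlist m) = m x.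
Proof.
rewrite /mlist count_flatten -map_comp sumnE big_map big_enum /=.
rewrite (bigD1 x) //= count_nseq /= eqxx mul1n big1 ?addn0 // => y /negbTE.
by rewrite count_nseq /= eq_sym => ->.
Qed.

Lemma size_mlist (T : finType) (m : mset T) : size (mlist m) = msize m.
Proof.
rewrite /mlist size_flatten /shape -map_comp sumnE big_map big_enum /=.
by apply: eq_bigr => x _; rewrite /= size_nseq.
Qed.

Lemma perm_mlist (T : finType) (s : seq T) : perm_eq (mlist (mset_of s)) s.
Proof. by apply/allP => x _; rewrite /= count_mlist ffunE. Qed.

Lemma msize_mset_of (T : finType) (s : seq T) : msize (mset_of s) = size s.
Proof. by rewrite -size_mlist (perm_size (perm_mlist s)). Qed.

Lemma mset_of_perm (T : finType) (s1 s2 : seq T) :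
  mset_of s1 = mset_of s2 -> perm_eq s1 s2.
Proof. by move=> e; rewrite -(permPl (perm_mlist s1)) e perm_mlist. Qed.

Lemma symmetric_mset_pair (T : finType) (r : rel T) (x1 x2 y1 y2 : T) :
  symmetric r -> mset_of [:: x1; x2] = mset_of [:: y1; y2] -> r y1 y2 -> r x1 x2.
Proof.
move=> r_sym /mset_of_perm e.
have : x1 \in [:: y1; y2] by rewrite -(perm_mem e) mem_head.
rewrite !inE => /orP [/eqP x1y1|/eqP x1y2].
  by move: e; rewrite x1y1 perm_cons => /perm_small_eq-/(_ isT) [->].
subst x1; have e' : perm_eq [:: y2; x2] [:: y2; y1].
  by rewrite (permPl e) (perm_catC [:: y1] [:: y2]).
by move: e'; rewrite perm_cons r_sym => /perm_small_eq-/(_ isT) [->].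
Qed.

Lemma nth_map_ord (T : Type) n (F : 'I_n -> T) x0 (i : 'I_n) :
  nth x0 [seq F j | j <- enum 'I_n] i = F i.
Proof. by rewrite (nth_map i) ?size_enum_ord // nth_ord_enum. Qed.

Lemma nth_codom_ord (T : Type) n (F : 'I_n -> T) x0 (i : 'I_n) :
  nth x0 (codom F) i = F i.
Proof. exact: nth_map_ord. Qed.

Lemma nth_map_codom_ord (T U : Type) n (g : T -> U) (F : 'I_n -> T) x0 (i : 'I_n) :
  nth x0 (map g (codom F)) i = g (F i).
Proof. by rewrite codomE -map_comp nth_map_ord. Qed.

Lemma map_nth_enum_ord (T : Type) n x0 (s : seq T) :
  size s = n -> [seq nth x0 s j | j : 'I_n <- enum 'I_n] = s.
Proof. by move=> sz; rewrite -[RHS](mkseq_nth x0) sz /mkseq -val_enum_ord -map_comp. Qed.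

Lemma relax_map D (P P' : problem) (h : lab P -> lab P') (y0 : lab P') :
  (forall C, nodeC P C -> msize C = D) ->
  (forall C, nodeC P C -> nodeC P' (mset_of (map h (mlist C)))) ->
  (forall L1 L2, edgeC P (mset_of [:: L1; L2]) -> edgeC P' (mset_of [:: h L1; h L2])) ->
  relax D P P'.
Proof.
move=> node_size node_map edge_map.
have entry C j L : onth (mlist C) j = Some L -> nth y0 (map h (mlist C)) j = h L.
  by move=> e; apply: onth_nth; rewrite onth_map e.
exists (fun C j => nth y0 (map h (mlist C)) j).
split=> [C nodeC_C | C C' j j' L1 L2 _ _ C_j C'_j'].
  by rewrite map_nth_enum_ord ?node_map // size_map size_mlist node_size.
by rewrite (entry _ _ _ C_j) (entry _ _ _ C'_j'); apply: edge_map.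
Qed.

Section SetProblem.
Variables (D : nat) (T : finType) (adj : rel T) (W : pred {ffun 'I_D -> T}).
Hypothesis adj_sym : symmetric adj.
Hypothesis W_perm : forall w (q : 'S_D), W w -> W [ffun i => w (q i)].

Definition complete (X Y : {set T}) : bool := [forall x in X, forall y in Y, adj x y].

Definition hits (s : seq {set T}) : bool :=
  [forall w, W w ==> [exists i : 'I_D, w i \in nth set0 s i]].

Definition set_problem : problem :=
  @Problem {set T}
    (fun m => [exists s : D.-tuple {set T}, (m == mset_of s) && hits s])
    (fun m => [exists X : {set T}, exists Y : {set T},
                (m == mset_of [:: X; Y]) && complete X Y]).

Lemma completeP (X Y : {set T}) :
  reflect (forall x y, x \in X -> y \in Y -> adj x y) (complete X Y).
Proof.
apply: (iffP forall_inP) => [h x y xX yY | h x xX].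
  by move/forall_inP: (h x xX); apply.
by apply/forall_inP => y; apply: h.
Qed.

Lemma complete_sym : symmetric complete.
Proof.
by move=> X Y; apply/completeP/completeP => h x y xX yY; rewrite adj_sym; apply: h.
Qed.

Lemma completeS (X Y X' Y' : {set T}) :
  X \subset X' -> Y \subset Y' -> complete X' Y' -> complete X Y.
Proof.
move=> /subsetP sX /subsetP sY /completeP h; apply/completeP => x y xX yY.
by apply: h; [apply: sX | apply: sY].
Qed.

Lemma complete_bigcup (I J : finType) (P : pred I) (Q : pred J) F G :
  (forall i j, P i -> Q j -> complete (F i) (G j)) ->
  complete (\bigcup_(i | P i) F i) (\bigcup_(j | Q j) G j).
Proof.
move=> h; apply/completeP => x y /bigcupP [i Pi xF] /bigcupP [j Qj yG].
exact: completeP (h i j Pi Qj) x y xF yG.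
Qed.

Lemma hitsS (s1 s2 : seq {set T}) :
  (forall i : 'I_D, nth set0 s1 i \subset nth set0 s2 i) -> hits s1 -> hits s2.
Proof.
move=> sub /forallP h; apply/forallP => w; apply/implyP => Ww.
have /existsP [i wi] := implyP (h w) Ww.
by apply/existsP; exists i; apply: subsetP wi.
Qed.

Lemma hits_reindex (s1 s2 : seq {set T}) (p : 'S_D) :
  (forall i : 'I_D, nth set0 s1 i = nth set0 s2 (p i)) -> hits s2 -> hits s1.
Proof.
move=> s12 /forallP h; apply/forallP => w; apply/implyP => Ww.
have /implyP/(_ (W_perm (p^-1)%g Ww))/existsP [k] := h [ffun k => w ((p^-1)%g k)].
by rewrite ffunE => wk; apply/existsP; exists ((p^-1)%g k); rewrite s12 permKV.
Qed.

Lemma perm_hits (s1 s2 : seq {set T}) :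
  perm_eq s1 s2 -> size s2 = D -> hits s1 = hits s2.
Proof.
move=> e sz; have /tuple_permP [p s1E] : perm_eq s1 (Tuple (introT eqP sz)) by [].
have s12 (i : 'I_D) : nth set0 s1 i = nth set0 s2 (p i).
  by rewrite s1E /= nth_map_ord (tnth_nth set0).
apply/idP/idP; first apply: (hits_reindex (p := (p^-1)%g)) => i.
  by rewrite s12 permKV.
exact: hits_reindex.
Qed.

Lemma nodeC_set_problem (s : seq {set T}) :
  size s = D -> nodeC set_problem (mset_of s) = hits s.
Proof.
move=> sz; apply/existsP/idP => [[t /andP [/eqP e ht]] | hs].
  by rewrite (perm_hits (mset_of_perm e)) ?size_tuple.
have sz' : size s == D by apply/eqP.
by exists (Tuple sz'); rewrite eqxx.
Qed.

Lemma edgeC_set_problem (X Y : {set T}) :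
  edgeC set_problem (mset_of [:: X; Y]) = complete X Y.
Proof.
apply/existsP/idP => [[X' /existsP [Y' /andP [/eqP e c]]] | c].
  exact: symmetric_mset_pair complete_sym e c.
by exists X; apply/existsP; exists Y; rewrite eqxx.
Qed.

Lemma wf_set_problem : wf_problem D set_problem.
Proof.
split=> m.
  by case/existsP=> s /andP [/eqP -> _]; rewrite msize_mset_of size_tuple.
by case/existsP=> X /existsP [Y /andP [/eqP -> _]]; rewrite msize_mset_of.
Qed.

Local Notation R := (R_problem set_problem D).
Local Notation Q := (Q_problem D set_problem).

Definition union_label (L : lab R) : {set T} := \bigcup_(X in val L) X.

Definition meet_union (t : lab Q) : {set T} := \bigcap_(L in val t) union_label L.

Lemma edgeR_complete (L1 L2 : lab R) :
  edgeC R (mset_of [:: L1; L2]) -> complete (union_label L1) (union_label L2).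
Proof.
case/existsP=> L1' /existsP [L2' /andP [/eqP e /andP [good _]]].
pose r L L' := complete (union_label L) (union_label L').
apply: (symmetric_mset_pair (r := r) _ e) => [L L' | ]; first exact: complete_sym.
case/and3P: good => _ _ /forall_inP edges; apply: complete_bigcup => X Y XL YL.
by rewrite -edgeC_set_problem; move/forall_inP: (edges X XL); apply.
Qed.

Lemma edgeQ_complete (t1 t2 : lab Q) :
  edgeC Q (mset_of [:: t1; t2]) -> complete (meet_union t1) (meet_union t2).
Proof.
case/existsP=> t1' /existsP [t2' /andP [/eqP e edge_t']].
case/exists_inP: edge_t' => L1 L1t /exists_inP [L2 L2t edgeL].
pose r t t' := complete (meet_union t) (meet_union t').
apply: (symmetric_mset_pair (r := r) _ e) => [t t' | ]; first exact: complete_sym.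
by apply: completeS (edgeR_complete edgeL); apply: bigcap_inf.
Qed.

Lemma nodeR_hits_union (s : seq (lab R)) :
  nodeC R (mset_of s) -> hits (map union_label s).
Proof.
case/existsP=> t /andP [/eqP e /existsP [c /andP [/forallP ct nodeC_c]]].
rewrite (perm_hits (perm_map _ (mset_of_perm e))); last first.
  by rewrite size_map size_codom card_ord.
move: nodeC_c; rewrite nodeC_set_problem; last by rewrite size_codom card_ord.
apply: hitsS => i; rewrite nth_codom_ord nth_map_codom_ord.
exact: bigcup_sup (ct i).
Qed.

Lemma hits_meet_union (t : {ffun 'I_D -> lab Q}) :
  (forall c : {ffun 'I_D -> lab R}, (forall i, c i \in val (t i)) ->
     hits (map union_label (codom c))) ->
  hits (map meet_union (codom t)).
Proof.
move=> choice_hits; apply/forallP => w; apply/implyP => Ww; apply: contraT.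
rewrite negb_exists => /forallP w_out.
have /fin_all_exists [c cE] :
    forall i, exists L : lab R, L \in val (t i) /\ w i \notin union_label L.
  move=> i; move: (w_out i).
  rewrite nth_map_codom_ord -in_setC setC_bigcap => /bigcupP [L Lt].
  by rewrite inE => wL; exists L.
have c_t i : [ffun i => c i] i \in val (t i) by rewrite ffunE; case: (cE i).
move/forallP/(_ w): (choice_hits _ c_t); rewrite Ww => /existsP [i].
by rewrite nth_map_codom_ord ffunE; case: (cE i) => _ /negPf ->.
Qed.

Lemma relax_Q_set_problem : relax D Q set_problem.
Proof.
apply: (@relax_map D Q set_problem meet_union set0).
- by move=> C /existsP [t /andP [/eqP -> _]]; rewrite msize_mset_of size_codom card_ord.
- move=> C /existsP [t /andP [/eqP -> /andP [/andP [_ /forallP choices_nodeR] _]]].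
  rewrite nodeC_set_problem; last first.
    by rewrite size_map size_mlist msize_mset_of size_codom card_ord.
  rewrite (perm_hits (perm_map _ (perm_mlist _))); last first.
    by rewrite size_map size_codom card_ord.
  apply: hits_meet_union => c ct; apply: nodeR_hits_union.
  by apply: (implyP (choices_nodeR c)); apply/forallP => i; rewrite ffunE.
- by move=> t1 t2 /edgeQ_complete; rewrite edgeC_set_problem.
Qed.

End SetProblem.

Section Coordinates.
Variable D : nat.

(* [(b, i)] is the value [i + 1] on side [b] ([false]: y, [true]: z).  Distinct vertices
   are adjacent except the two values 1; only these two carry loops. *)
Definition coord_adj (u v : bool * 'I_D) : bool :=
  ((u == v) ==> (val u.2 == 0)) && ~~ [&& u.1 != v.1, val u.2 == 0 & val v.2 == 0].

Definition coord_set (c : 'I_D * 'I_D) : {set bool * 'I_D} :=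
  [set (false, c.1); (true, c.2)].

Definition side_transversal (w : {ffun 'I_D -> bool * 'I_D}) : bool :=
  [exists b, exists q : 'S_D, w == [ffun i => (b, q i)]].

Definition coord_problem : problem := set_problem coord_adj side_transversal.

Lemma coord_adj_sym : symmetric coord_adj.
Proof.
move=> u v; rewrite /coord_adj [v == u]eq_sym.
by case: eqVneq => [-> // | _]; rewrite [v.1 == u.1]eq_sym (andbC (val v.2 == 0)).
Qed.

Lemma side_transversal_perm w (q : 'S_D) :
  side_transversal w -> side_transversal [ffun i => w (q i)].
Proof.
case/existsP=> b /existsP [p /eqP ->].
apply/existsP; exists b; apply/existsP; exists (q * p)%g.
by apply/eqP/ffunP => i; rewrite !ffunE permM.
Qed.

Lemma nodeC_coord_problem s :
  size s = D -> nodeC coord_problem (mset_of s) = hits side_transversal s.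
Proof. exact: nodeC_set_problem side_transversal_perm s. Qed.

Lemma edgeC_coord_problem X Y :
  edgeC coord_problem (mset_of [:: X; Y]) = complete coord_adj X Y.
Proof. exact: edgeC_set_problem coord_adj_sym X Y. Qed.

Lemma PiE_complete a b : PiE a b -> complete coord_adj (coord_set a) (coord_set b).
Proof.
case: a b => y z [y' z']; rewrite /PiE /isone => h.
apply/completeP => u v; rewrite !inE => /orP [] /eqP -> /orP [] /eqP ->;
  rewrite /coord_adj /= ?xpair_eqE /=; move: h; by do ! case: (_ == _).
Qed.

Lemma hits_coord_set c : hits side_transversal (nseq D (coord_set c)).
Proof.
apply/forallP => w; apply/implyP => /existsP [b /existsP [q /eqP ->]].
apply/existsP; exists ((q^-1)%g (if b then c.2 else c.1)).
by rewrite nth_nseq ltn_ord ffunE permKV !inE; case: b; rewrite eqxx ?orbT.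
Qed.

Lemma relax_PiDelta : relax D (PiDelta D) coord_problem.
Proof.
apply: (@relax_map D (PiDelta D) coord_problem coord_set set0).
- by move=> C /existsP [c /eqP ->]; rewrite msize_mset_of size_nseq.
- move=> C /existsP [c /eqP ->].
  rewrite nodeC_coord_problem; last by rewrite size_map size_mlist msize_mset_of size_nseq.
  rewrite (perm_hits side_transversal_perm (perm_map _ (perm_mlist _))); last first.
    by rewrite size_map size_nseq.
  by rewrite map_nseq hits_coord_set.
- move=> L1 L2 /existsP [a /existsP [b /andP [/eqP e ab]]].
  rewrite edgeC_coord_problem.
  pose r a' b' := complete coord_adj (coord_set a') (coord_set b').
  apply: (symmetric_mset_pair (r := r) _ e) => [a' b' | ].
    exact: complete_sym coord_adj_sym _ _.
  exact: PiE_complete.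
Qed.

Lemma self_complete_side_free (U : {set bool * 'I_D}) :
  complete coord_adj U U -> exists b, forall i, (b, i) \notin U.
Proof.
move/completeP => U_clique.
have loop b i : (b, i) \in U -> val i = 0.
  by move=> iU; have := U_clique _ _ iU iU; rewrite /coord_adj eqxx => /andP [/eqP].
exists [exists i, (false, i) \in U] => i.
case: existsP => [[i0 i0U] | no_false]; last by apply/negP => iU; apply: no_false; exists i.
apply/negP => iU; move: (U_clique _ _ i0U iU).
by rewrite /coord_adj /= (loop _ _ i0U) (loop _ _ iU).
Qed.

Lemma not_zero_round_coord_problem : ~ zero_round_solvable D coord_problem.
Proof.
case=> f [node_f edge_f].
pose C0 := mset_of (nseq D tt).
have C0_node : nodeC (trivial_problem D) C0 by rewrite /= eqxx.
have C0_entry (j : 'I_D) : onth (mlist C0) j = Some tt.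
  case e: (onth _ j) => [[]|] //; move: (onthTE (mlist C0) j).
  by rewrite e size_mlist msize_mset_of size_nseq ltn_ord.
have f_complete j j' : complete coord_adj (f C0 j) (f C0 j').
  rewrite -edgeC_coord_problem.
  by apply: (edge_f _ _ _ _ tt tt C0_node C0_node (C0_entry j) (C0_entry j')); rewrite /= eqxx.
have U_clique : complete coord_adj (\bigcup_j f C0 j) (\bigcup_j f C0 j).
  by apply: complete_bigcup => j j' _ _; apply: f_complete.
have [b U_free] := self_complete_side_free U_clique.
move: (node_f C0 C0_node); rewrite nodeC_coord_problem; last by rewrite size_map size_enum_ord.
have w_side : side_transversal [ffun i => (b, i)].
  apply/existsP; exists b; apply/existsP; exists 1%g.
  by apply/eqP/ffunP => i; rewrite !ffunE perm1.
move/forallP/(_ [ffun i => (b, i)]); rewrite w_side => /existsP [i].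
rewrite ffunE nth_map_ord => /(subsetP (bigcup_sup i (erefl true))).
by rewrite (negbTE (U_free i)).
Qed.

End Coordinates.

Theorem mainTheorem1 (D : nat) (hD : 3 <= D) :
  exists G : problem,
    [/\ wf_problem D G,
        relax D (PiDelta D) G,
        relax D (Q_problem D G) G &
        ~ zero_round_solvable D G].
Proof.
(* The construction works for every [D]. *)
exists (coord_problem D); split.
- exact: wf_set_problem.
- exact: relax_PiDelta.
- exact: relax_Q_set_problem (@coord_adj_sym D) (@side_transversal_perm D).
- exact: not_zero_round_coord_problem.
Qed.
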